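(* Let $D=(E,\mathcal{F})$ be a normal binary delta-matroid. Then the twist polynomial ${}^{\partial}w_{D}(z)$ has a non-zero constant term (i.e. $w(D*A)=0$ for some $A\subseteq E$) if and only if the intersection graph $G_D$ is a bipartite graph (in particular has no loops).
   Context: A delta-matroid is a set system $(E,\mathcal{F})$, $\mathcal{F}\ne\emptyset$ a family of subsets of finite $E$, satisfying: for all $X,Y\in\mathcal{F}$ and $u\in X\Delta Y$ there is $v\in X\Delta Y$ with $X\Delta\{u,v\}\in\mathcal{F}$. Twist: $D*A=(E,\{A\Delta X:X\in\mathcal{F}\})$. Width $w(D)$ = maximum minus minimum cardinality of feasible sets; twist polynomial ${}^{\partial}w_{D}(z)=\sum_{A\subseteq E}z^{w(D*A)}$. $D$ is normal if $\emptyset\in\mathcal{F}$. For a symmetric matrix $C$ over $GF(2)$ indexed by $E$, $D(C)=(E,\{A\subseteq E: C[A]\text{ nonsingular}\})$ ($C[A]$ principal submatrix, $C[\emptyset]$ nonsingular by convention). $D$ is binary if some twist of it is isomorphic to some $D(C)$. A normal binary $D$ equals $D(C)$ for a unique symmetric $C$; its intersection graph $G_D$ has vertex set $E$, distinct $u,v$ adjacent iff $C_{u,v}=1$, and a loop at $v$ iff $C_{v,v}=1$. *)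

From mathcomp Require Import all_boot all_order all_algebra.
Set Implicit Arguments. Unset Strict Implicit. Unset Printing Implicit Defensive.
Import GRing.Theory.
Local Open Scope ring_scope.

Definition symdiff (E : finType) (X Y : {set E}) : {set E} := (X :\: Y) :|: (Y :\: X).

Definition is_delta_matroid (E : finType) (F : {set {set E}}) : Prop :=
  F != set0 /\
  forall X Y, X \in F -> Y \in F -> forall u, u \in symdiff X Y ->
    exists2 v, v \in symdiff X Y & symdiff X [set u; v] \in F.

Definition twist (E : finType) (F : {set {set E}}) (A : {set E}) : {set {set E}} :=
  [set symdiff A X | X in F].

Definition width (E : finType) (F : {set {set E}}) : nat :=
  ((\max_(X in F) #|X|) - \big[minn/#|E|]_(X in F) #|X|)%N.

Definition twist_poly (E : finType) (F : {set {set E}}) : {poly int} :=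
  \sum_(A : {set E}) 'X^(width (twist F A)).

Definition is_normal (E : finType) (F : {set {set E}}) : Prop := set0 \in F.

Definition symmetric_mx (E : finType) (C : E -> E -> 'F_2) : Prop :=
  forall u v, C u v = C v u.

Definition principal_submx (E : finType) (C : E -> E -> 'F_2) (A : {set E})
  : 'M['F_2]_#|A| :=
  \matrix_(i < #|A|, j < #|A|) C (enum_val i) (enum_val j).

(* C[A] nonsingular; for A = set0 the 0x0 determinant is 1, so it is nonsingular *)
Definition nonsingular_principal (E : finType) (C : E -> E -> 'F_2) (A : {set E}) : bool :=
  \det (principal_submx C A) != 0.

Definition DC (E : finType) (C : E -> E -> 'F_2) : {set {set E}} :=
  [set A : {set E} | nonsingular_principal C A].

(* Since isomorphic set systems have equinumerous ground sets, it suffices to take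
   C indexed by E itself and the isomorphism a bijection E -> E. *)
Definition is_binary (E : finType) (F : {set {set E}}) : Prop :=
  exists (A : {set E}) (C : E -> E -> 'F_2) (f : E -> E),
    [/\ symmetric_mx C, bijective f & twist F A = [set f @: X | X : {set E} in DC C]].

(* intersection graph of D = D(C): u ~ v (u <> v) iff C u v = 1; loop at v iff C v v = 1.
   We record the adjacency relation including loops. *)
Definition ig_adj (E : finType) (C : E -> E -> 'F_2) (u v : E) : bool := C u v == 1.

(* bipartite (as a graph possibly with loops): a 2-colouring in which every
   edge (including loops) joins vertices of different colours. *)
Definition bipartite (E : finType) (adj : E -> E -> bool) : Prop :=
  exists c : E -> bool, forall u v, adj u v -> c u != c v.

From mathcomp Require Import all_boot all_order all_algebra.
From mathcomp Require Import zify all_fingroup.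
Set Implicit Arguments.
Unset Strict Implicit.
Unset Printing Implicit Defensive.
Import GRing.Theory Num.Theory.
Local Open Scope ring_scope.

(* Since the empty set is feasible, the
   twist D*A contains A, so w(D*A) = 0 exactly when every feasible set of
   D*A has |A| elements; as the feasible sets of D*A are the A Δ X with X
   feasible, this says that A "splits evenly" every feasible X:
   |X ∩ A| = |X \ A|.  The constant term of the twist polynomial counts
   the A with w(D*A) = 0, so the theorem reduces to:
     some A splits every nonsingular principal submatrix evenly
       <->  G_D has a 2-colouring with no monochromatic edge or loop.
   (<-) If A is a colour class and C[X] is nonsingular, some term of the
   Leibniz expansion of det C[X] is non-zero, i.e. a permutation s of X
   with C x (s x) = 1 for all x; s swaps colours, so X ∩ A and X \ A have
   the same size.  (->) A loop at w makes {w} feasible, which cannot be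
   split evenly; an edge uv makes {u,v} feasible, forcing exactly one of
   u, v into A.  So A is a colour class of a proper 2-colouring.
   Only normality and F = D(C) are used; the delta-matroid and binary
   hypotheses merely guarantee that C exists. *)

Lemma F2_nonzero_eq1 (x : 'F_2) : x != 0 -> x = 1.
Proof. by case: x => [[|[|n]]] //= ? _; apply: val_inj. Qed.

Lemma det_castmx (R : comNzRingType) n m (eq_nm : n = m) (M : 'M[R]_n) :
  \det (castmx (eq_nm, eq_nm) M) = \det M.
Proof. by case: m / eq_nm; rewrite castmx_id. Qed.

Lemma det_mx22 (R : comNzRingType) (M : 'M[R]_2) :
  \det M = M 0 0 * M 1 1 - M 0 1 * M 1 0.
Proof.
rewrite (expand_det_row _ 0) !big_ord_recl big_ord0 /cofactor !det_mx11 !mxE /=.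
rewrite (_ : lift 0 0 = 1 :> 'I_2); last exact: val_inj.
rewrite (_ : lift 1 0 = 0 :> 'I_2); last exact: val_inj.
by rewrite expr0 expr1 mul1r mulN1r addr0 mulrN.
Qed.

Lemma det_neq0_perm (R : comNzRingType) n (M : 'M[R]_n) :
  \det M != 0 -> exists s : 'S_n, forall i, M i (s i) != 0.
Proof.
case: (pickP (fun s : 'S_n => [forall i, M i (s i) != 0])) => [s /forallP|no_s].
  by exists s.
rewrite /determinant big1 ?eqxx // => s _.
have /forallPn [i /negPn /eqP Msi0] := negbT (no_s s).
by rewrite (bigD1 i) //= Msi0 mul0r mulr0.
Qed.

Lemma perm_swapping_colours_balanced (T : finType) (s : {perm T}) (c : pred T) :
  (forall i, c (s i) != c i) -> #|[set i | c i]| = #|[set i | ~~ c i]|.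
Proof.
move=> swap.
have maps_le (P Q : pred T) :
    (forall i, P i -> Q (s i)) -> (#|[set i | P i]| <= #|[set i | Q i]|)%N.
  move=> PQ; rewrite -(card_imset _ (@perm_inj _ s)); apply: subset_leq_card.
  by apply/subsetP => j /imsetP [i]; rewrite !inE => /PQ + ->.
by apply/eqP; rewrite eqn_leq !maps_le // => i; have := swap i;
  case: (c i); case: (c (s i)).
Qed.

Lemma card_enum_val_set (T : finType) (X : {set T}) (Q : pred T) :
  #|[set i : 'I_#|X| | Q (enum_val i)]| = #|[set x in X | Q x]|.
Proof.
have -> : [set x in X | Q x] = enum_val @: [set i : 'I_#|X| | Q (enum_val i)].
  apply/setP => x; rewrite inE; apply/andP/imsetP => [[xX Qx]|[i]].
    by exists (enum_rank_in xX x); rewrite ?inE enum_rankK_in.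
  by rewrite inE => Qi ->; split => //; apply: enum_valP.
by rewrite card_imset //; apply: enum_val_inj.
Qed.

Lemma bigmin_le (I : eqType) (r : seq I) (P : pred I) (f : I -> nat) k i :
  i \in r -> P i -> (\big[minn/k]_(j <- r | P j) f j <= f i)%N.
Proof.
elim: r => [|a r IH] //; rewrite big_cons in_cons.
case/orP => [/eqP ->|ir] Pi; first by rewrite Pi geq_minl.
case: (P a); last exact: IH.
exact: leq_trans (geq_minr _ _) (IH ir Pi).
Qed.

Lemma coef0_twist_poly (E : finType) (F : {set {set E}}) :
  (twist_poly F)`_0 != 0 <-> exists A, width (twist F A) = 0%N.
Proof.
rewrite /twist_poly coef_sum.
under eq_bigr => A _ do rewrite coefXn eq_sym.
rewrite -natr_sum pnatr_eq0 sum_nat_eq0; split.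
  by case/forallPn => A /=; rewrite eqb0 negbK => /eqP; exists A.
by case=> A widthA; apply/forallPn; exists A; rewrite /= widthA.
Qed.

Section Twists.
Variable E : finType.
Implicit Types (A X Y : {set E}) (F : {set {set E}}) (C : E -> E -> 'F_2).

Definition splits_evenly A X : Prop := #|X :&: A| = #|X :\: A|.

Lemma width_eq0 F Y0 : Y0 \in F ->
  width F = 0%N <-> (forall Y, Y \in F -> #|Y| = #|Y0|).
Proof.
move=> Y0F; rewrite /width.
have le_max Y : Y \in F -> (#|Y| <= \max_(X in F) #|X|)%N.
  by move=> YF; apply: leq_bigmax_cond.
have min_le Y : Y \in F -> (\big[minn/#|E|]_(X in F) #|X| <= #|Y|)%N.
  by move=> YF; apply: bigmin_le; rewrite ?mem_index_enum.
split=> [/eqP | same_size]; rewrite ?subn_eq0.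
  move=> max_le_min Y YF; apply/eqP; rewrite eqn_leq.
  rewrite (leq_trans (le_max _ YF) (leq_trans max_le_min (min_le _ Y0F))).
  exact: leq_trans (le_max _ Y0F) (leq_trans max_le_min (min_le _ YF)).
apply/eqP; rewrite subn_eq0 (@leq_trans #|Y0|) //.
  by apply/bigmax_leqP => Y YF; rewrite same_size.
apply: (big_ind (fun m => #|Y0| <= m)%N) => [|a b|Y YF]; first exact: max_card.
  by rewrite leq_min => -> ->.
by rewrite same_size.
Qed.

Lemma card_symdiff_eq A X : #|symdiff A X| = #|A| <-> splits_evenly A X.
Proof.
have disj : (A :\: X) :&: (X :\: A) = set0.
  by apply/setP => x; rewrite !inE; case: (x \in A); case: (x \in X).
rewrite /splits_evenly /symdiff cardsU disj cards0 subn0 -(cardsID X A) setIC.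
lia.
Qed.

Lemma width_twist_eq0 F A : set0 \in F ->
  width (twist F A) = 0%N <-> (forall X, X \in F -> splits_evenly A X).
Proof.
move=> F0; have AF : A \in twist F A.
  by apply/imsetP; exists set0; rewrite // /symdiff setD0 set0D setU0.
rewrite (width_eq0 AF); split=> [same_size X XF | even _ /imsetP [X XF ->]].
  by apply/card_symdiff_eq/same_size/imset_f.
exact/card_symdiff_eq/even.
Qed.

Lemma det_principal_single C v : \det (principal_submx C [set v]) = C v v.
Proof.
rewrite -(det_castmx (cards1 v)) det_mx11 castmxE mxE.
by have := enum_valP (cast_ord (esym (cards1 v)) 0); rewrite inE => /eqP ->.
Qed.

Lemma det_principal_pair C u v : symmetric_mx C -> u != v ->
  C u u = 0 -> C v v = 0 -> C u v = 1 -> \det (principal_submx C [set u; v]) != 0.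
Proof.
move=> Csym uv Cuu Cvv Cuv; have card_uv : #|[set u; v]| = 2%N by rewrite cards2 uv.
rewrite -(det_castmx card_uv) det_mx22 !castmxE !mxE.
set x := enum_val _; set y := enum_val _.
have xy : x != y by apply/eqP => /enum_val_inj/(congr1 val).
have diag w : w \in [set u; v] -> C w w = 0 by rewrite !inE => /orP [] /eqP ->.
have off a b : a \in [set u; v] -> b \in [set u; v] -> a != b -> C a b = 1.
  by rewrite !inE => /orP [] /eqP -> /orP [] /eqP ->; rewrite ?eqxx // Csym.
have [xuv yuv] : x \in [set u; v] /\ y \in [set u; v] by split; apply: enum_valP.
by rewrite !diag // !off // 1?eq_sym // mul0r mulr1 sub0r oppr_eq0 oner_eq0.
Qed.

Lemma nonsingular_splits_evenly C A X :
  (forall u v, ig_adj C u v -> (u \in A) != (v \in A)) ->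
  nonsingular_principal C X -> splits_evenly A X.
Proof.
move=> properA /det_neq0_perm [s nonzero].
have swap i : (enum_val (s i) \in A) != (enum_val i \in A).
  rewrite eq_sym; apply: properA; apply/eqP/F2_nonzero_eq1.
  by have := nonzero i; rewrite mxE.
have := perm_swapping_colours_balanced swap.
rewrite (card_enum_val_set X (mem A)) (card_enum_val_set X [predC A]).
have -> : [set x in X | mem A x] = X :&: A by apply/setP => x; rewrite !inE.
by have -> : [set x in X | [predC A] x] = X :\: A by apply/setP => x; rewrite !inE andbC.
Qed.

Section EvenSplitting.
Variables (C : E -> E -> 'F_2) (A : {set E}).
Hypothesis even : forall X, X \in DC C -> splits_evenly A X.

Lemma even_splitting_no_loops w : C w w = 0.
Proof.
apply/eqP; apply: contraT => /F2_nonzero_eq1 Cw.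
have /even : [set w] \in DC C.
  by rewrite inE /nonsingular_principal det_principal_single Cw oner_eq0.
by rewrite /splits_evenly; have := cardsID A [set w]; rewrite cards1; lia.
Qed.

Lemma even_splitting_separates_edges u v : symmetric_mx C ->
  ig_adj C u v -> (u \in A) != (v \in A).
Proof.
move=> Csym /eqP Cuv; apply/negP => /eqP sameA.
have uv : u != v by apply: contra_eq_neq Cuv => ->; rewrite even_splitting_no_loops.
have /even : [set u; v] \in DC C.
  by rewrite inE /nonsingular_principal det_principal_pair ?even_splitting_no_loops.
have pairA x : x \in [set u; v] -> (x \in A) = (u \in A).
  by rewrite !inE => /orP [] /eqP ->.
rewrite /splits_evenly; have := cardsID A [set u; v]; rewrite cards2 uv.
case uA: (u \in A).
  have /eqP -> : [set u; v] :\: A == set0.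
    by rewrite setD_eq0; apply/subsetP => x /pairA ->.
  by rewrite cards0; lia.
have -> : [set u; v] :&: A = set0.
  apply/disjoint_setI0; rewrite disjoints_subset.
  by apply/subsetP => x /pairA; rewrite uA inE => ->.
by rewrite cards0; lia.
Qed.

End EvenSplitting.
End Twists.

Theorem mainTheorem8 (E : finType) (F : {set {set E}}) (C : E -> E -> 'F_2) :
  is_delta_matroid F -> is_normal F -> is_binary F ->
  symmetric_mx C -> F = DC C ->
  ((twist_poly F)`_0 != 0 <-> bipartite (ig_adj C)).
Proof.
move=> _ F0 _ Csym DF; subst F; rewrite coef0_twist_poly; split.
  case=> A /(width_twist_eq0 _ F0) even; exists (mem A) => u v.
  exact: even_splitting_separates_edges.
case=> c proper; exists [set x | c x]; apply/(width_twist_eq0 _ F0) => X.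
rewrite inE; apply: nonsingular_splits_evenly => u v /proper.
by rewrite !inE.
Qed.
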